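(* Let $\hat{\mathbb{N}}=\{n\in\mathbb{N}: n\ge 3\}$, let $n \in \hat{\mathbb{N}}$ and $M \subseteq \hat{\mathbb{N}} \setminus \{n\}$. Then $\mathrm{pPol}\, R^{\Lambda}_n \not\supseteq \bigcap_{m \in M} \mathrm{pPol}\, R^{\Lambda}_m$.
   Context: Partial functions are on $\{0,1\}$: an $n$-ary partial function is a map $f:\operatorname{dom} f\to\{0,1\}$ with $\operatorname{dom} f\subseteq\{0,1\}^n$; an empty intersection of sets of partial functions is understood as the set of all partial functions. For $\rho\subseteq\{0,1\}^h$, $\mathrm{pPol}\,\rho$ is the set of partial functions $f$ such that for every $h\times n$ matrix whose rows lie in $\operatorname{dom} f$ and whose columns lie in $\rho$, the column obtained by applying $f$ row-wise lies in $\rho$. For $m\ge3$, $R^{\Lambda}_m\subseteq\{0,1\}^{m+1}$ is the set of tuples $(x_1,\dots,x_{m+1})$ satisfying $x_1\lor\lnot x_2\lor\cdots\lor\lnot x_{m+1}$ and, for all pairwise distinct $i,j_1,j_2\in\{2,\dots,m+1\}$, $x_i\lor\lnot x_1\lor\lnot x_{j_1}\lor\lnot x_{j_2}$. *)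

From mathcomp Require Import all_boot.
Set Implicit Arguments. Unset Strict Implicit. Unset Printing Implicit Defensive.

Notation btuple k := {ffun 'I_k -> bool}.

Record pfun := PFun { pf_ar : nat; pf_fun : btuple pf_ar -> option bool }.

Definition pPol (h : nat) (rho : btuple h -> Prop) (f : pfun) : Prop :=
  forall (X : 'I_h -> btuple (pf_ar f)) (y : btuple h),
    (forall i, @pf_fun f (X i) = Some (y i)) ->
    (forall j : 'I_(pf_ar f), rho [ffun i => X i j]) ->
    rho y.

(* R^Lambda_m as a subset of {0,1}^(m+1); coordinate x_{k+1} of the paper
   is x k here (k : 'I_m.+1), so x_1 is x ord0. *)
Definition RLambda (m : nat) (x : btuple m.+1) : Prop :=
  (x ord0 \/ exists j : 'I_m.+1, j != ord0 /\ ~~ x j) /\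
  (forall i j1 j2 : 'I_m.+1,
     i != ord0 -> j1 != ord0 -> j2 != ord0 ->
     i != j1 -> i != j2 -> j1 != j2 ->
     x i \/ ~~ x ord0 \/ ~~ x j1 \/ ~~ x j2).

From mathcomp Require Import all_boot zify.

Set Implicit Arguments.
Unset Strict Implicit.
Unset Printing Implicit Defensive.

(* Let f have as domain the rows r_0, ..., r_n of the (n+1) x 2(n+1) matrix whose
   columns are, for each j, the indicator of {0, j} and (for j != 0) its complement,
   with f(r_p) = [p != 0].  Every column lies in R^Lambda_n but (0,1,...,1) does not,
   so f is not in pPol R^Lambda_n.  Now let m != n and apply f to rows
   r_(phi 0), ..., r_(phi m) whose columns lie in R^Lambda_m.  If the first clause
   failed, the columns would make phi onto with phi k = 0 only for k = 0; as m != n,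
   phi has a collision, and the columns then force phi to be constant off 0.  If a
   second clause failed, three values of phi would cover {1, ..., n}, so n = 3 and
   m >= 4, and the columns leave no possible value for phi at a fourth index. *)

Lemma leq_card_surj (T T' : finType) (f : T -> T') :
  (forall y, exists x, f x = y) -> #|T'| <= #|T|.
Proof.
move=> f_surj; apply: leq_trans (leq_image_card f T).
by apply/subset_leq_card/subsetP => y _; have [x <-] := f_surj y; apply: image_f.
Qed.

Lemma exists_notin (T : finType) (s : seq T) : size s < #|T| -> exists x, x \notin s.
Proof.
move=> lt_s_T; case: (pickP [predC s]) => [x | all_in]; first by exists x.
suff : #|T| <= size s by rewrite leqNgt lt_s_T.
apply: leq_trans (card_size s); apply/subset_leq_card/subsetP => x _.
by have /negbFE := all_in x.
Qed.

Lemma uniq4E (T : eqType) (a b c d : T) :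
  uniq [:: a; b; c; d] = [&& b != a, c != a, d != a & [&& b != c, b != d & c != d]].
Proof. by rewrite /= !inE !negb_or !(eq_sym a) andbT -!andbA. Qed.

Lemma uniq_swap12 (T : eqType) (a b c d : T) :
  uniq [:: a; c; b; d] = uniq [:: a; b; c; d].
Proof. by apply/perm_uniq; rewrite perm_cons (permEl (perm_catCA [:: c] [:: b] [:: d])). Qed.

Lemma RLambda_ffun m (x : 'I_m.+1 -> bool) :
  RLambda [ffun k => x k] <->
  (x ord0 \/ exists2 j, j != ord0 & ~~ x j) /\
  (forall i j1 j2, uniq [:: ord0; i; j1; j2] -> x i \/ ~~ x ord0 \/ ~~ x j1 \/ ~~ x j2).
Proof.
split=> -[cl1 cl2]; split.
- rewrite ffunE in cl1; case: cl1 => [|[j [j_nz]]]; first by left.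
  by rewrite ffunE; right; exists j.
- move=> i j1 j2; rewrite uniq4E => /and4P[? ? ? /and3P[*]].
  by have := cl2 i j1 j2; rewrite !ffunE; apply.
- rewrite ffunE; case: cl1 => [|[j j_nz xj]]; first by left.
  by right; exists j; rewrite ?ffunE.
- move=> i j1 j2 *; rewrite !ffunE; apply: cl2.
  by rewrite uniq4E; apply/and4P; split=> //; apply/and3P.
Qed.

Section SeparatingFunction.

Variable n : nat.
Implicit Types p j : 'I_n.+1.

Definition near p j : bool := (p == ord0) || (p == j).
Definition far p j : bool := (j == ord0) || ~~ near p j.

Lemma near0 j : near ord0 j. Proof. by rewrite /near eqxx. Qed.

Lemma nearxx p : near p p. Proof. by rewrite /near eqxx orbT. Qed.

Lemma near_nz p j : p != ord0 -> near p j = (p == j).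
Proof. by rewrite /near => /negbTE ->. Qed.

Lemma near_ord0 p : near p ord0 = (p == ord0).
Proof. by rewrite /near orbb. Qed.

Lemma far_nz p j : j != ord0 -> far p j = ~~ near p j.
Proof. by rewrite /far => /negbTE ->. Qed.

Lemma near2_eq0 p j j' : j != j' -> near p j -> near p j' -> p = ord0.
Proof.
move=> neq_jj'; case: (eqVneq p ord0) => // p_nz.
by rewrite !near_nz // => /eqP-> /eqP j_j'; rewrite j_j' eqxx in neq_jj'.
Qed.

Lemma RLambda_near j : RLambda [ffun p => near p j].
Proof.
apply/RLambda_ffun; split=> [|i j1 j2 U]; first by left; apply: near0.
move: U; rewrite uniq4E => /and4P[_ j1_nz j2_nz /and3P[_ _ j12]].
do 2 right; rewrite !near_nz //; case: (eqVneq j1 j) => [<-|]; last by left.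
by right; rewrite eq_sym.
Qed.

Lemma RLambda_far j : RLambda [ffun p => far p j].
Proof.
have [->|j_nz] := eqVneq j ord0.
  by apply/RLambda_ffun; split=> [|*]; left.
apply/RLambda_ffun; split=> [|*]; last by right; left; rewrite far_nz // near0.
by right; exists j; rewrite // far_nz // negbK nearxx.
Qed.

Lemma not_RLambda_nonzero : ~ RLambda [ffun p : 'I_n.+1 => p != ord0].
Proof. by case/RLambda_ffun => -[/eqP | [j ->]]. Qed.

Definition sep_row p : btuple (n.+1 + n.+1) :=
  [ffun c => match split c with inl j => far p j | inr j => near p j end].

Lemma sep_row_far p j : sep_row p (lshift n.+1 j) = far p j.
Proof. by rewrite ffunE (unsplitK (inl _ j)). Qed.

Lemma sep_row_near p j : sep_row p (rshift n.+1 j) = near p j.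
Proof. by rewrite ffunE (unsplitK (inr _ j)). Qed.

Definition row_index (x : btuple (n.+1 + n.+1)) : 'I_n.+1 :=
  odflt ord0 [pick p | x == sep_row p].

Definition fsep : pfun := @PFun (n.+1 + n.+1)
  (fun x => if [exists p, x == sep_row p] then Some (row_index x != ord0) else None).

Lemma fsep_Some {x b} :
  @pf_fun fsep x = Some b -> x = sep_row (row_index x) /\ b = (row_index x != ord0).
Proof.
rewrite /=; case: existsP => // -[p /eqP x_p] [<-]; split=> //.
by rewrite /row_index; case: pickP => [q /eqP // | /(_ p)]; rewrite x_p eqxx.
Qed.

Lemma fsep_sep_row p : @pf_fun fsep (sep_row p) = Some (p != ord0).
Proof.
have dom : @pf_fun fsep (sep_row p) = Some (row_index (sep_row p) != ord0).
  by rewrite /=; case: existsP => // -[]; exists p.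
have [row_p _] := fsep_Some dom.
by rewrite dom -!near_ord0 -!sep_row_near -row_p.
Qed.

Lemma fsep_not_pPol : ~ pPol (@RLambda n) fsep.
Proof.
move=> pres; apply: not_RLambda_nonzero; apply: (pres sep_row) => [p | c].
  by rewrite ffunE fsep_sep_row.
rewrite -(splitK c); case: (split c) => j /=.
  by rewrite (eq_ffun _ (sep_row_far^~ j)); apply: RLambda_far.
by rewrite (eq_ffun _ (sep_row_near^~ j)); apply: RLambda_near.
Qed.

End SeparatingFunction.

Section Preservation.

Variables n m : nat.
Variable phi : 'I_m.+1 -> 'I_n.+1.
Hypothesis far_cols : forall j, RLambda [ffun k => far (phi k) j].
Hypothesis near_cols : forall j, RLambda [ffun k => near (phi k) j].

Lemma far_cover j : j != ord0 -> near (phi ord0) j -> exists2 k, k != ord0 & near (phi k) j.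
Proof.
move=> j_nz near_0j; have [cl1 _] := (RLambda_ffun _).1 (far_cols j).
case: cl1 => [|[k k_nz]]; first by rewrite far_nz // near_0j.
by rewrite far_nz // negbK; exists k.
Qed.

Lemma far_triple j i j1 j2 : j != ord0 -> uniq [:: ord0; i; j1; j2] ->
  near (phi i) j -> [|| near (phi ord0) j, near (phi j1) j | near (phi j2) j].
Proof.
move=> j_nz U near_ij; have [_ cl2] := (RLambda_ffun _).1 (far_cols j).
have := cl2 i j1 j2 U; rewrite !far_nz // near_ij !negbK.
by case=> [// | [|[]] ->]; rewrite ?orbT.
Qed.

Lemma near_triple j i j1 j2 : uniq [:: ord0; i; j1; j2] ->
  near (phi ord0) j -> near (phi j1) j -> near (phi j2) j -> near (phi i) j.
Proof.
move=> U near_0 near_1 near_2; have [_ cl2] := (RLambda_ffun _).1 (near_cols j).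
by case: (cl2 i j1 j2 U); rewrite ?near_0 ?near_1 ?near_2 // => -[|[]].
Qed.

Section OnlyZeroToZero.

Hypothesis phi0 : phi ord0 = ord0.
Hypothesis phi_nz : forall k, k != ord0 -> phi k != ord0.

Lemma phi_onto j : exists k, phi k = j.
Proof.
have [->|j_nz] := eqVneq j ord0; first by exists ord0.
have near_0j : near (phi ord0) j by rewrite phi0 near0.
have [k k_nz] := far_cover j_nz near_0j.
by rewrite near_nz ?phi_nz // => /eqP; exists k.
Qed.

Lemma phi_collision_const k1 k2 : k1 != ord0 -> k2 != ord0 -> k1 != k2 ->
  phi k1 = phi k2 -> forall p, p != ord0 -> phi p = phi k1.
Proof.
move=> k1_nz k2_nz k12 phi12 p p_nz.
have [->|p_k1] := eqVneq p k1; first by [].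
have [->|p_k2] := eqVneq p k2; first by [].
have U4 : uniq [:: ord0; p; k1; k2] by rewrite uniq4E p_nz k1_nz k2_nz p_k1 p_k2 k12.
have := near_triple (j := phi k1) U4; rewrite phi0 phi12 near0 nearxx near_nz ?phi_nz //.
by move/(_ isT isT isT)/eqP.
Qed.

End OnlyZeroToZero.

Lemma nonzero_clause1 : 1 < n -> m != n ->
  phi ord0 != ord0 \/ exists2 k, k != ord0 & phi k == ord0.
Proof.
move=> n_gt1 m_neq_n; case: (eqVneq (phi ord0) ord0) => [phi0|]; last by left.
case: (pickP (fun k => (k != ord0) && (phi k == ord0))) => [k /andP[k_nz phik] | no_zero].
  by right; exists k.
exfalso; have phi_nz k : k != ord0 -> phi k != ord0.
  by move=> k_nz; have := no_zero k; rewrite k_nz => /negbT.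
have phi_eq0 k : phi k = ord0 -> k = ord0.
  by move=> phik; apply/eqP; apply: contraTT (phi_nz k) _; rewrite phik.
have onto := phi_onto phi0 phi_nz.
have le_nm : n <= m by have := leq_card_surj onto; rewrite !card_ord.
have [phi_inj | /injectivePn [k1 [k2 k12 phi12]]] := altP (injectiveP phi).
  by have := leq_card phi phi_inj; rewrite !card_ord; lia.
have k1_nz : k1 != ord0.
  apply: contraNneq k12 => k1_0; rewrite k1_0 eq_sym.
  by apply/eqP/phi_eq0; rewrite -phi12 k1_0.
have k2_nz : k2 != ord0.
  by apply: contraNneq k12 => k2_0; rewrite k2_0; apply/eqP/phi_eq0; rewrite phi12 k2_0.
have [j j_notin] : exists j, j \notin [:: ord0; phi k1].
  by apply: exists_notin; rewrite card_ord.
have [k phik] := onto j; move: j_notin; rewrite -phik !inE.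
have [->|k_nz] := eqVneq k ord0; first by rewrite phi0 eqxx.
by rewrite (phi_collision_const phi0 phi_nz k1_nz k2_nz k12 phi12 k_nz) eqxx orbT.
Qed.

Section ZeroAmongNonzero.

Variables k j1 j2 : 'I_m.+1.
Hypothesis U : uniq [:: ord0; k; j1; j2].
Hypothesis phik : phi k = ord0.
Hypothesis phi0_nz : phi ord0 != ord0.
Hypothesis phi1_nz : phi j1 != ord0.
Hypothesis phi2_nz : phi j2 != ord0.

Lemma cover_three j : j != ord0 -> j \in [:: phi ord0; phi j1; phi j2].
Proof.
move=> j_nz; have := far_triple j_nz U; rewrite phik near0 !near_nz //.
by rewrite !inE !(eq_sym j); apply.
Qed.

Lemma three_values : 2 < n -> n = 3 /\ uniq [:: phi ord0; phi j1; phi j2].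
Proof.
move=> n_gt2; set s := [:: phi ord0; phi j1; phi j2].
have le_n : n <= #|s|.
  have sub : predC1 (@ord0 n) \subset s.
    by apply/subsetP => j; rewrite inE; apply: cover_three.
  by have := subset_leq_card sub; rewrite cardC1 card_ord.
have le_s3 : #|s| <= 3 := card_size s.
by split; [lia | apply/card_uniqP; change (#|s| = 3); lia].
Qed.

Lemma nonzero_clause2_contra : 2 < n -> 2 < m -> m != n -> False.
Proof.
move=> n_gt2 m_gt2 m_neq_n; have [n3] := three_values n_gt2.
rewrite /= !inE !negb_or => /and3P[/andP[ne01 ne02] ne12 _].
have [l l_notin] : exists l, l \notin [:: ord0; k; j1; j2].
  by apply: exists_notin; rewrite card_ord /=; lia.
have U5 : uniq (rcons [:: ord0; k; j1; j2] l) by rewrite rcons_uniq l_notin U.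
have phil_near1 : near (phi l) (phi j1).
  have := far_triple phi1_nz (mask_uniq U5 [:: true; true; false; true; true]).
  rewrite phik near0 (near_nz _ phi0_nz) (near_nz _ phi2_nz).
  by rewrite (negbTE ne01) eq_sym (negbTE ne12); apply.
have phil_near2 : near (phi l) (phi j2).
  have := far_triple phi2_nz (mask_uniq U5 [:: true; true; true; false; true]).
  rewrite phik near0 (near_nz _ phi0_nz) (near_nz _ phi1_nz).
  by rewrite (negbTE ne02) (negbTE ne12); apply.
have phil : phi l = ord0 := near2_eq0 ne12 phil_near1 phil_near2.
have U' : uniq [:: ord0; j1; k; l].
  by rewrite uniq_swap12; apply: (mask_uniq U5 [:: true; true; true; false; true]).
have := near_triple (j := phi ord0) U'; rewrite phik phil near0 nearxx near_nz //.
by rewrite eq_sym (negbTE ne01) => /(_ isT isT isT).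
Qed.

End ZeroAmongNonzero.

Lemma RLambda_nonzero_comp : 2 < n -> 2 < m -> m != n ->
  RLambda [ffun k => phi k != ord0].
Proof.
move=> n_gt2 m_gt2 m_neq_n; apply/RLambda_ffun; split.
  case: (nonzero_clause1 (ltnW n_gt2) m_neq_n) => [|[k k_nz phik]]; first by left.
  by right; exists k; rewrite ?negbK.
move=> i j1 j2 U; rewrite !negbK.
have [phii|] := eqVneq (phi i) ord0; last by left.
have [|phi0_nz] := eqVneq (phi ord0) ord0; first by right; left.
have [|phi1_nz] := eqVneq (phi j1) ord0; first by do 2 right; left.
have [|phi2_nz] := eqVneq (phi j2) ord0; first by do 3 right.
by case: (nonzero_clause2_contra U phii phi0_nz phi1_nz phi2_nz n_gt2 m_gt2 m_neq_n).
Qed.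

End Preservation.

Lemma fsep_pPol n m : 2 < n -> 2 < m -> m != n -> pPol (@RLambda m) (fsep n).
Proof.
move=> n_gt2 m_gt2 m_neq_n X y X_dom X_cols.
pose phi k := row_index (X k).
have X_row k : X k = sep_row (phi k) /\ y k = (phi k != ord0) := fsep_Some (X_dom k).
have -> : y = [ffun k => phi k != ord0] by apply/ffunP => k; rewrite ffunE (X_row k).2.
apply: (RLambda_nonzero_comp (phi := phi)) => // j.
  rewrite (_ : [ffun k => _] = [ffun k => X k (lshift n.+1 j)]) //.
  by apply/ffunP => k; rewrite !ffunE (X_row k).1 sep_row_far.
rewrite (_ : [ffun k => _] = [ffun k => X k (rshift n.+1 j)]) //.
by apply/ffunP => k; rewrite !ffunE (X_row k).1 sep_row_near.
Qed.

Theorem mainTheorem19 (n : nat) (M : nat -> Prop) :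
  3 <= n -> (forall m, M m -> 3 <= m) -> ~ M n ->
  ~ (forall f : pfun, (forall m, M m -> pPol (@RLambda m) f) ->
                      pPol (@RLambda n) f).
Proof.
move=> n_ge3 M_ge3 not_Mn pPol_incl; apply: (@fsep_not_pPol n); apply: pPol_incl => m Mm.
apply: fsep_pPol => //; first exact: M_ge3.
by apply/eqP => m_n; apply: not_Mn; rewrite -m_n.
Qed.
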